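(* Let $a\in\mathbb C$ and let $\mathfrak g=\mathcal W(a,1)$ be the Lie algebra with basis $\{L_i,H_i: i\in\mathbb Z\}$ and brackets $[L_i,L_j]=(j-i)L_{i+j}$, $[L_i,H_j]=(a+j+i)H_{i+j}$, $[H_i,H_j]=0$. Let $\mathfrak p=\mathrm{Span}\{H_i: i\in\mathbb Z\}$ and let $\phi:\mathfrak p\to\mathbb C$ be a nonzero linear map which is upper finite (resp. lower finite), and let $j_0$ be the maximal (resp. minimal) element of $S^\phi=\{j\in\mathbb Z:\phi(H_j)\neq0\}$. Then $W(\phi)$ is reducible if and only if $S^\phi=\{j_0\}$ and $a=-j_0$.
   Context: Since $\mathfrak p$ is abelian, every linear map $\phi:\mathfrak p\to\mathbb C$ is a Lie algebra homomorphism. $\phi$ is upper (resp. lower) finite if there exists $j_1\in\mathbb Z$ with $\phi(H_j)=0$ for all $j>j_1$ (resp. $j<j_1$). $W(\phi)=\mathcal U(\mathfrak g)\otimes_{\mathcal U(\mathfrak p)}\mathbb C w_\phi$, where $\mathbb C w_\phi$ is the one-dimensional $\mathfrak p$-module with $pw_\phi=\phi(p)w_\phi$. *)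

From HB Require Import structures.
From mathcomp Require Import all_boot all_order all_algebra.
From mathcomp Require Import reals.
From mathcomp Require Import complex.
Set Implicit Arguments. Unset Strict Implicit. Unset Printing Implicit Defensive.
Import Order.TTheory GRing.Theory Num.Theory.
Local Open Scope ring_scope.

Definition Cx (R : realType) := (R[i])%C.

(* A module over g = W(a,1): a C-vector space V with linear operators
   rhoL i, rhoH i (the actions of the basis vectors L_i, H_i) satisfying
   [L_i,L_j] = (j-i) L_{i+j}, [L_i,H_j] = (a+j+i) H_{i+j}, [H_i,H_j] = 0.
   (A linear action of g is determined by the action of the basis.) *)
Definition is_Wmodule (R : realType) (a : Cx R) (V : lmodType (Cx R))
    (rhoL rhoH : int -> V -> V) : Prop :=
  [/\ (forall i, linear (rhoL i)), (forall i, linear (rhoH i)),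
      (forall i j v, rhoL i (rhoL j v) - rhoL j (rhoL i v)
                       = (j - i)%:~R *: rhoL (i + j) v),
      (forall i j v, rhoL i (rhoH j v) - rhoH j (rhoL i v)
                       = (a + (j + i)%:~R) *: rhoH (i + j) v) &
      (forall i j v, rhoH i (rhoH j v) = rhoH j (rhoH i v))].

(* A linear functional phi : p -> C on p = Span{H_i} is given by its values
   phi(H_j); we represent it by the function j |-> phi(H_j). *)
Definition Sphi (R : realType) (phi : int -> Cx R) (j : int) : Prop := phi j != 0.

Definition upper_finite (R : realType) (phi : int -> Cx R) : Prop :=
  exists j1 : int, forall j, j1 < j -> phi j = 0.
Definition lower_finite (R : realType) (phi : int -> Cx R) : Prop :=
  exists j1 : int, forall j, j < j1 -> phi j = 0.

(* W(phi) = U(g) (x)_{U(p)} C w_phi, characterised up to isomorphism by its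
   universal property (induced module): (V, w) is a g-module with
   H_j w = phi(H_j) w such that for every g-module M and m in M with
   H_j m = phi(H_j) m there is a unique g-module map f : V -> M with f w = m. *)
Definition is_Wphi (R : realType) (a : Cx R) (phi : int -> Cx R)
    (V : lmodType (Cx R)) (rhoL rhoH : int -> V -> V) (w : V) : Prop :=
  [/\ is_Wmodule a rhoL rhoH,
      (forall j, rhoH j w = phi j *: w) &
      (forall (M : lmodType (Cx R)) (mL mH : int -> M -> M) (m : M),
          is_Wmodule a mL mH -> (forall j, mH j m = phi j *: m) ->
          exists f : V -> M,
            [/\ linear f, f w = m,
                (forall i v, f (rhoL i v) = mL i (f v)),
                (forall i v, f (rhoH i v) = mH i (f v)) &
                (forall g : V -> M, linear g -> g w = m ->
                   (forall i v, g (rhoL i v) = mL i (g v)) ->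
                   (forall i v, g (rhoH i v) = mH i (g v)) ->
                   forall v, g v = f v)])].

Definition is_submodule (R : realType) (V : lmodType (Cx R))
    (rhoL rhoH : int -> V -> V) (S : V -> Prop) : Prop :=
  [/\ S 0, (forall u v, S u -> S v -> S (u + v)),
      (forall (c : Cx R) v, S v -> S (c *: v)),
      (forall i v, S v -> S (rhoL i v)) & (forall i v, S v -> S (rhoH i v))].

Definition reducible (R : realType) (V : lmodType (Cx R))
    (rhoL rhoH : int -> V -> V) : Prop :=
  exists S : V -> Prop, [/\ is_submodule rhoL rhoH S,
                            (exists v, S v /\ v <> 0) & (exists v, ~ S v)].

(* By its universal property W(phi) is spanned by the words L_(i_1) ... L_(i_k) w,
   and the L_i commute modulo shorter words, so the top-degree part of a vector is
   determined by coefficients summed over reorderings of words.  The operator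
   H_j - phi(H_j) lowers the word length, and on top-degree parts it acts as the
   derivation sending L_i to -psi(i + j), where psi k = (a + k) phi(H_k).
   If psi is not identically zero it has an extreme nonzero value psi jt, because
   S^phi is bounded on one side; for a finite set of letters with extreme element m,
   the shift j = jt - m kills every letter but m, so the derivation acts as a single
   partial derivative and keeps the top-degree part nonzero.  Descending degree by
   degree, every nonzero vector of a submodule produces a nonzero multiple of w, so
   W(phi) is irreducible.  No linear independence of PBW monomials is needed: a top
   part whose reordered coefficients all vanish lies in lower degree.
   Conversely psi = 0 exactly when S^phi = {j0} and a = -j0; then W(phi) maps onto
   the one-dimensional module on which every L_i acts by 0, and the kernel contains
   L_1 w, which is nonzero since its image is nonzero in the module of functions
   Z -> C with (L_i f)(n) = (n - i) f(n - i). *)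

From HB Require Import structures.
From mathcomp Require Import all_boot all_order all_algebra.
From mathcomp Require Import reals complex.
From mathcomp Require Import boolp functions ring zify.
Import Order.TTheory GRing.Theory Num.Theory.
Local Open Scope ring_scope.
Set Implicit Arguments. Unset Strict Implicit. Unset Printing Implicit Defensive.

Section LinearFun.
Variables (K : pzRingType) (U V : lmodType K) (f : U -> V).
Hypothesis f_linear : linear f.
Let fL : {linear U -> V} := HB.pack f (GRing.isLinear.Build _ _ _ _ f f_linear).

Lemma lin0 : f 0 = 0. Proof. exact: (linear0 fL). Qed.
Lemma linD : {morph f : u v / u + v}. Proof. exact: (linearD fL). Qed.
Lemma linB : {morph f : u v / u - v}. Proof. exact: (linearB fL). Qed.
Lemma linZ c : {morph f : u / c *: u}. Proof. exact: (linearZZ fL). Qed.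
Lemma lin_sum (I : Type) (r : seq I) (P : pred I) (F : I -> U) :
  f (\sum_(i <- r | P i) F i) = \sum_(i <- r | P i) f (F i).
Proof. exact: (linear_sum fL). Qed.
End LinearFun.

(** * Quotient modules *)

Section QuotientModule.
Variables (K : pzRingType) (V : lmodType K) (S : submodClosed V).

(* [submodClosed] only records closure under addition and scaling. *)
Let rpredN_S x : x \in S -> - x \in S.
Proof. by rewrite -scaleN1r; apply: rpredZ. Qed.

Let rpredB_S x y : x \in S -> y \in S -> x - y \in S.
Proof. by move=> Sx Sy; rewrite rpredD ?rpredN_S. Qed.

Lemma quot_class_ex (x : V) : exists y, x - y \in S.
Proof. by exists x; rewrite subrr rpred0. Qed.

Definition qrepr (x : V) : V := xchoose (quot_class_ex x).
Arguments qrepr : simpl never.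

Lemma qreprP x : x - qrepr x \in S.
Proof. exact: (xchooseP (quot_class_ex x)). Qed.

Lemma qrepr_eq x y : x - y \in S -> qrepr x = qrepr y.
Proof.
move=> Sxy; rewrite /qrepr; apply: eq_xchoose => z /=; apply/idP/idP => Sz.
  have -> : y - z = (x - z) - (x - y) by rewrite opprB [RHS]addrC addrA subrK.
  exact: rpredB_S.
have -> : x - z = (x - y) + (y - z) by rewrite addrA subrK.
exact: rpredD.
Qed.

Lemma qrepr_idem x : qrepr (qrepr x) = qrepr x.
Proof. by apply: qrepr_eq; rewrite -opprB; apply/rpredN_S/qreprP. Qed.

Definition quotient := {x : V | qrepr x == x}.
HB.instance Definition _ := Choice.on quotient.

Definition qpi (x : V) : quotient := exist _ (qrepr x) (introT eqP (qrepr_idem x)).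

Lemma qpiK q : qpi (val q) = q.
Proof. by case: q => x qx; apply: val_inj => /=; apply/eqP. Qed.

Lemma quotW (P : quotient -> Prop) : (forall x, P (qpi x)) -> forall q, P q.
Proof. by move=> Ppi q; rewrite -[q]qpiK. Qed.

Lemma qpi_eqP x y : qpi x = qpi y <-> x - y \in S.
Proof.
split=> [/(congr1 val) /= eq_xy | /qrepr_eq eq_xy]; last exact: val_inj.
have := rpredB_S (qreprP x) (qreprP y).
by rewrite eq_xy opprB addrA subrK.
Qed.

Definition qadd (p q : quotient) := qpi (val p + val q).
Definition qopp (q : quotient) := qpi (- val q).
Definition qscale (c : K) (q : quotient) := qpi (c *: val q).
Lemma qpiE x : val (qpi x) = qrepr x. Proof. by []. Qed.

Lemma qaddE x y : qadd (qpi x) (qpi y) = qpi (x + y).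
Proof.
apply/qpi_eqP; rewrite !qpiE.
have -> : qrepr x + qrepr y - (x + y) = - ((x - qrepr x) + (y - qrepr y)).
  by rewrite [RHS]opprD !opprB addrACA opprD.
by apply/rpredN_S/rpredD; apply: qreprP.
Qed.

Lemma qoppE x : qopp (qpi x) = qpi (- x).
Proof. by apply/qpi_eqP; rewrite qpiE opprK addrC; apply: qreprP. Qed.

Lemma qscaleE c x : qscale c (qpi x) = qpi (c *: x).
Proof.
apply/qpi_eqP; rewrite qpiE -scalerBr -opprB scalerN.
by apply/rpredN_S/rpredZ/qreprP.
Qed.

Lemma qaddA : associative qadd.
Proof. by do 3!elim/quotW=> ?; rewrite !qaddE addrA. Qed.
Lemma qaddC : commutative qadd.
Proof. by do 2!elim/quotW=> ?; rewrite !qaddE addrC. Qed.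
Lemma qadd0 : left_id (qpi 0) qadd.
Proof. by elim/quotW=> x; rewrite qaddE add0r. Qed.
Lemma qaddN : left_inverse (qpi 0) qopp qadd.
Proof. by elim/quotW=> x; rewrite qoppE qaddE addNr. Qed.
HB.instance Definition _ := GRing.isZmodule.Build quotient qaddA qaddC qadd0 qaddN.

Lemma qscaleA c d q : qscale c (qscale d q) = qscale (c * d) q.
Proof. by elim/quotW: q => x; rewrite !qscaleE scalerA. Qed.
Lemma qscale1 : left_id 1 qscale.
Proof. by elim/quotW=> x; rewrite qscaleE scale1r. Qed.
Lemma qscaleDr : right_distributive qscale qadd.
Proof. by move=> c; do 2!elim/quotW=> ?; rewrite qaddE !qscaleE qaddE scalerDr. Qed.
Lemma qscaleDl q : {morph qscale^~ q : c d / c + d >-> qadd c d}.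
Proof. by elim/quotW: q => x c d; rewrite !qscaleE qaddE scalerDl. Qed.
HB.instance Definition _ :=
  GRing.Zmodule_isLmodule.Build K quotient qscaleA qscale1 qscaleDr qscaleDl.

Lemma qpi_linear : linear qpi.
Proof.
move=> c x y; change (qpi (c *: x + y) = qadd (qscale c (qpi x)) (qpi y)).
by rewrite qscaleE qaddE.
Qed.
HB.instance Definition _ := GRing.isLinear.Build K V quotient *:%R qpi qpi_linear.

Lemma qpi_eq0 x : (qpi x = 0) <-> (x \in S).
Proof. by rewrite -[0]/(qpi 0) qpi_eqP subr0. Qed.

Definition qmap (f : V -> V) (q : quotient) : quotient := qpi (f (val q)).

Lemma qmapE (f : V -> V) : linear f -> {homo f : x / x \in S} ->
  forall x, qmap f (qpi x) = qpi (f x).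
Proof.
move=> f_lin f_S x; apply/qpi_eqP; rewrite qpiE -(linB f_lin).
by apply/f_S; rewrite -opprB; apply/rpredN_S/qreprP.
Qed.
Lemma qmap_linear (f : V -> V) : linear f -> {homo f : x / x \in S} -> linear (qmap f).
Proof.
move=> f_lin f_S c; do 2!elim/quotW=> ?.
by rewrite -linearP !(qmapE f_lin f_S) (f_lin c) linearP.
Qed.
End QuotientModule.

Arguments qpi {K V} S x.
Arguments qmap {K V} S f q.

(** * Extreme indices *)

Lemma ex_minimal_seq (T : eqType) (leT : rel T) :
  reflexive leT -> total leT -> transitive leT ->
  forall s, s != [::] -> exists2 m, m \in s & {in s, forall x, leT m x}.
Proof.
move=> leT_refl leT_total leT_tr s s_neq0.
have := sort_sorted leT_total s; have := mem_sort leT s.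
case: (sort leT s) => [|m s'] mem_s sorted_s.
  by case: s s_neq0 mem_s => // x s _ /(_ x); rewrite mem_head.
exists m => [|x]; first by rewrite -mem_s mem_head.
rewrite -mem_s inE => /predU1P[-> //|x_s'].
exact: (allP (order_path_min leT_tr sorted_s)).
Qed.

Lemma ex_int_max (P : int -> Prop) (b : int) :
  (exists x, P x) -> (forall y, P y -> y <= b) ->
  exists2 z, P z & forall y, P y -> y <= z.
Proof.
move=> [x Px] P_le.
pose Pn (n : nat) := `[< P (b - n%:Z) >].
have P_dist y : P y -> Pn `|b - y|%N.
  by move=> Py; apply/asboolP; rewrite gez0_abs ?subr_ge0 ?P_le // opprB addrC subrK.
have [n /asboolP Pbn n_min] := ex_minnP (ex_intro Pn _ (P_dist x Px)).
exists (b - n%:Z) => // y Py.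
have := n_min _ (P_dist y Py); have := P_le y Py; lia.
Qed.

Lemma ex_int_min (P : int -> Prop) (b : int) :
  (exists x, P x) -> (forall y, P y -> b <= y) ->
  exists2 z, P z & forall y, P y -> z <= y.
Proof.
move=> [x Px] P_ge.
have [|y Py|z Pz z_max] := @ex_int_max (fun y => P (- y)) (- b).
- by exists (- x); rewrite opprK.
- by rewrite lerNr; apply: P_ge.
by exists (- z) => // y Py; rewrite lerNl; apply: z_max; rewrite opprK.
Qed.

Definition separating (K : zmodType) (g : int -> K) :=
  forall ls : seq int, ls != [::] -> exists j, exists2 m, m \in ls &
    g (m + j) != 0 /\ {in ls, forall i, i != m -> g (i + j) = 0}.

Section Separating.
Variables (K : zmodType) (g : int -> K).

Lemma separating_top jt : g jt != 0 -> (forall k, jt < k -> g k = 0) -> separating g.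
Proof.
move=> g_jt g_gt ls /(ex_minimal_seq le_refl le_total le_trans)[m m_ls m_min].
exists (jt - m), m => //; rewrite addrC subrK; split=> // i i_ls neq_im.
by apply: g_gt; have := m_min i i_ls; lia.
Qed.

Lemma separating_bottom jb : g jb != 0 -> (forall k, k < jb -> g k = 0) -> separating g.
Proof.
have ge_total : total (>=%R : rel int) by move=> x y; apply: le_total.
have ge_trans : transitive (>=%R : rel int) by move=> x y z /[swap]; apply: le_trans.
move=> g_jb g_lt ls /(@ex_minimal_seq _ >=%R le_refl ge_total ge_trans)[m m_ls m_max].
exists (jb - m), m => //; rewrite addrC subrK; split=> // i i_ls neq_im.
by apply: g_lt; have := m_max i i_ls; lia.
Qed.

Lemma separating_bounded_above b : (exists k, g k != 0) ->
  (forall k, g k != 0 -> k <= b) -> separating g.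
Proof.
move=> ex_g g_le; have [jt g_jt jt_max] := ex_int_max ex_g g_le.
apply: (separating_top g_jt) => k lt_k.
by have [//|/jt_max] := eqVneq (g k) 0; rewrite leNgt lt_k.
Qed.

Lemma separating_bounded_below b : (exists k, g k != 0) ->
  (forall k, g k != 0 -> b <= k) -> separating g.
Proof.
move=> ex_g g_ge; have [jb g_jb jb_min] := ex_int_min ex_g g_ge.
apply: (separating_bottom g_jb) => k lt_k.
by have [//|/jb_min] := eqVneq (g k) 0; rewrite leNgt lt_k.
Qed.
End Separating.

(** * Words and their derivations *)

Lemma perm_cons_rem (T : eqType) (i : T) s t :
  perm_eq (i :: s) t = (i \in t) && perm_eq s (rem i t).
Proof.
have [i_t|i_t] /= := boolP (i \in t); first by rewrite (permPr (perm_to_rem i_t)) perm_cons.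
by apply/negP => /perm_mem/(_ i); rewrite mem_head => /esym; apply/negP.
Qed.

Local Notation sortw := (sort <=%R : seq int -> seq int).

Section WordSymbols.
Variable K : numDomainType.
Implicit Types (g : int -> K) (s t r : seq int) (l : seq (K * seq int)).

Lemma perm_sortwE s t : perm_eq s t = (sortw s == sortw t).
Proof. exact/(perm_sortP le_total le_trans le_anti)/eqP. Qed.

Lemma sortw_id s : sortw (sortw s) = sortw s.
Proof. exact/(sorted_sort le_trans)/(sort_sorted le_total). Qed.

(* The terms of the derivation sending the letter i to g i, applied to the word s. *)
Fixpoint deriv_word g s : seq (K * seq int) :=
  if s is i :: s' then (g i, s') :: [seq (x.1, i :: x.2) | x <- deriv_word g s']
  else [::].

Definition deriv_comb g l : seq (K * seq int) :=
  flatten [seq [seq (x.1 * y.1, y.2) | y <- deriv_word g x.2] | x <- l].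

Definition symcoef l t : K := \sum_(x <- l | perm_eq x.2 t) x.1.

Definition symnorm l : seq (K * seq int) :=
  [seq (symcoef l t, t) | t <- undup [seq sortw x.2 | x <- l]].

Definition deriv_coef g t r : K := \sum_(y <- deriv_word g t | perm_eq y.2 r) y.1.

Lemma size_deriv_word g s x : x \in deriv_word g s -> size x.2 = (size s).-1.
Proof.
elim: s x => [|i s IHs] x //=; rewrite inE => /predU1P[-> //|/mapP[y y_s ->]] /=.
by rewrite (IHs _ y_s); case: s {IHs} y_s.
Qed.

Lemma size_deriv_comb g l k x : {in l, forall y, size y.2 = k} ->
  x \in deriv_comb g l -> size x.2 = k.-1.
Proof.
move=> size_l /flattenP[_ /mapP[y y_l ->] /mapP[z z_y ->]] /=.
by rewrite (size_deriv_word z_y) size_l.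
Qed.

Lemma size_symnorm l k x : {in l, forall y, size y.2 = k} ->
  x \in symnorm l -> size x.2 = k.
Proof.
move=> size_l /mapP[t]; rewrite mem_undup => /mapP[y y_l ->] -> /=.
by rewrite size_sort size_l.
Qed.

Lemma symnorm_uniq l : uniq (symnorm l).
Proof. by rewrite map_inj_uniq ?undup_uniq // => t t' []. Qed.

Lemma symnorm_perm_inj l : {in symnorm l &, forall x y, perm_eq x.2 y.2 -> x = y}.
Proof.
move=> _ _ /mapP[t + ->] /mapP[t' + ->] /=; rewrite !mem_undup.
by move=> /mapP[u _ ->] /mapP[u' _ ->]; rewrite perm_sortwE !sortw_id => /eqP ->.
Qed.

Lemma mem_symnorm l x : x \in l -> (symcoef l (sortw x.2), sortw x.2) \in symnorm l.
Proof. by move=> x_l; apply: map_f; rewrite mem_undup; apply: map_f. Qed.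

Lemma symcoef_perm l t t' : perm_eq t t' -> symcoef l t = symcoef l t'.
Proof. by move=> perm_t; apply: eq_bigl => x; apply: (permPr perm_t). Qed.

Lemma symcoef_deriv_comb g l r :
  symcoef (deriv_comb g l) r = \sum_(x <- l) x.1 * deriv_coef g x.2 r.
Proof.
rewrite /symcoef big_flatten big_map; apply: eq_bigr => x _.
by rewrite big_map /deriv_coef big_distrr.
Qed.

Lemma deriv_coef_single g m t r : {in t, forall i, i != m -> g i = 0} ->
  deriv_coef g t r = g m * (count_mem m t)%:R * (perm_eq t (m :: r))%:R.
Proof.
elim: t r => [|i t IHt] r g_t; first by rewrite /deriv_coef big_nil mulr0 mul0r.
have g_t' : {in t, forall k, k != m -> g k = 0}.
  by move=> k k_t; apply: g_t; rewrite inE k_t orbT.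
have {}IHt r' := IHt r' g_t'.
rewrite /deriv_coef /= big_cons big_map /= -/(deriv_coef g t (rem i r)).
have -> : \sum_(y <- deriv_word g t | perm_eq (i :: y.2) r) y.1 =
          (i \in r)%:R * deriv_coef g t (rem i r).
  rewrite /deriv_coef; case: (boolP (i \in r)) => i_r.
    by rewrite mul1r; apply: eq_bigl => y; rewrite perm_cons_rem i_r.
  by rewrite mul0r big1 // => y; rewrite perm_cons_rem (negbTE i_r).
have [-> | neq_im] := eqVneq i m.
  have -> : (m \in r)%:R * deriv_coef g t (rem m r) =
            g m * (count_mem m t)%:R * (perm_eq t r)%:R.
    have [m_r | m_r] := boolP (m \in r).
      by rewrite mul1r IHt -(permPr (perm_to_rem m_r)).
    rewrite mul0r; case t_r: (perm_eq t r); last by rewrite mulr0.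
    suff -> : count_mem m t = 0%N by rewrite mulr0 mul0r.
    by apply/count_memPn; rewrite (perm_mem t_r).
  by rewrite perm_cons natrD /=; case: (perm_eq t r) => /=; ring.
rewrite g_t ?mem_head // add0r if_same perm_cons_rem inE (negbTE neq_im) /=.
rewrite eq_sym (negbTE neq_im) add0n.
by case: (i \in r); rewrite ?IHt ?mul1r ?mul0r ?mulr0.
Qed.

Definition reduced l :=
  [/\ uniq l, {in l &, forall x y, perm_eq x.2 y.2 -> x = y} & {in l, forall x, x.1 != 0}].

Lemma symcoef_deriv_comb_neq0 g m l c0 t0 : reduced l -> (c0, t0) \in l ->
  m \in t0 -> g m != 0 -> {in l, forall x, {in x.2, forall i, i != m -> g i = 0}} ->
  symcoef (deriv_comb g l) (rem m t0) != 0.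
Proof.
move=> [uniq_l perm_inj nz_l] x0_l m_t0 gm_neq0 g_l.
have coef_x x : x \in l -> deriv_coef g x.2 (rem m t0) =
    g m * (count_mem m x.2)%:R * (perm_eq x.2 t0)%:R.
  by move=> x_l; rewrite (deriv_coef_single _ (g_l x x_l)) -(permPr (perm_to_rem m_t0)).
rewrite symcoef_deriv_comb (bigD1_seq (c0, t0)) //= big1_seq => [|x /andP[neq_x x_l]].
  rewrite addr0 (coef_x _ x0_l) /= perm_refl mulr1 !mulf_neq0 ?(nz_l _ x0_l) //.
  by rewrite pnatr_eq0 -lt0n -has_count has_pred1.
rewrite coef_x //; case x_t0: (perm_eq x.2 t0); last by rewrite !mulr0.
by rewrite (perm_inj _ _ x_l x0_l x_t0) eqxx in neq_x.
Qed.
End WordSymbols.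

(** * The word filtration of a W(a,1)-module *)

(* [L_i, H_(k - i)] = (a + k) H_k acts on w as the scalar psi k. *)
Definition psi (K : pzRingType) (a : K) (phi : int -> K) (k : int) : K :=
  (a + k%:~R) * phi k.

Section WModule.
Variables (R : realType) (a : Cx R) (phi : int -> Cx R).
Local Notation K := (Cx R).
Variables (V : lmodType K) (rhoL rhoH : int -> V -> V) (w : V).
Hypothesis HV : is_Wmodule a rhoL rhoH.
Hypothesis Hw : forall j, rhoH j w = phi j *: w.
Implicit Types (s t : seq int) (l : seq (K * seq int)).

Let linL i : linear (rhoL i). Proof. by case: HV. Qed.
Let linH i : linear (rhoH i). Proof. by case: HV. Qed.
Let rhoLL i j v : rhoL i (rhoL j v) - rhoL j (rhoL i v) = (j - i)%:~R *: rhoL (i + j) v.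
Proof. by case: HV. Qed.
Let rhoLH i j v :
  rhoL i (rhoH j v) - rhoH j (rhoL i v) = (a + (j + i)%:~R) *: rhoH (i + j) v.
Proof. by case: HV. Qed.

Definition word s : V := foldr rhoL w s.
Definition comb l : V := \sum_(x <- l) x.1 *: word x.2.
Definition filt (n : nat) : {pred V} :=
  fun v => `[< exists2 l, all (fun x => size x.2 < n)%N l & v = comb l >].

Lemma word_cons i s : word (i :: s) = rhoL i (word s). Proof. by []. Qed.

Lemma comb_cons x l : comb (x :: l) = x.1 *: word x.2 + comb l.
Proof. exact: big_cons. Qed.

Lemma filtP n v :
  reflect (exists2 l, all (fun x => size x.2 < n)%N l & v = comb l) (v \in filt n).
Proof. exact: asboolP. Qed.

Lemma filt_submod_closed n : submod_closed (filt n).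
Proof.
split; first by apply/filtP; exists [::]; rewrite // /comb big_nil.
move=> c u v /filtP[l1 size_l1 ->] /filtP[l2 size_l2 ->]; apply/filtP.
exists ([seq (c * x.1, x.2) | x <- l1] ++ l2); first by rewrite all_cat all_map size_l2 andbT.
rewrite /comb big_cat big_map scaler_sumr; congr (_ + _).
by apply: eq_bigr => x _; rewrite scalerA.
Qed.
HB.instance Definition _ n := GRing.isSubmodClosed.Build K V (filt n) (filt_submod_closed n).

Lemma comb_filt n l : all (fun x => size x.2 < n)%N l -> comb l \in filt n.
Proof. by move=> size_l; apply/filtP; exists l. Qed.

Lemma word_filt n s : (size s < n)%N -> word s \in filt n.
Proof.
move=> size_s; apply/filtP; exists [:: (1, s)]; first by rewrite /= size_s.
by rewrite /comb big_seq1 scale1r.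
Qed.

Lemma filt0 v : v \in filt 0 -> v = 0.
Proof. by case/filtP=> -[|x l] // _ ->; rewrite /comb big_nil. Qed.

Lemma filt_le m n : (m <= n)%N -> {subset filt m <= filt n}.
Proof.
move=> le_mn v /filtP[l size_l ->]; apply: comb_filt.
by apply: sub_all size_l => x /leq_trans; apply.
Qed.

Lemma rhoL_comb i l : rhoL i (comb l) = comb [seq (x.1, i :: x.2) | x <- l].
Proof.
rewrite /comb big_map (lin_sum (linL i)).
by apply: eq_bigr => x _; rewrite (linZ (linL i)).
Qed.

Lemma rhoL_filt i n v : v \in filt n.-1 -> rhoL i v \in filt n.
Proof.
case: n => [/filt0 -> | n /filtP[l size_l ->]]; first by rewrite (lin0 (linL i)) rpred0.
by rewrite rhoL_comb; apply: comb_filt; rewrite all_map.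
Qed.

Lemma word_swap i t1 t2 :
  word (i :: t1 ++ t2) - word (t1 ++ i :: t2) \in filt (size t1 + size t2).+1.
Proof.
elim: t1 => [|x t1 IHt1]; first by rewrite subrr rpred0.
rewrite cat_cons !word_cons; set y := word (t1 ++ t2).
have -> : rhoL i (rhoL x y) - rhoL x (word (t1 ++ i :: t2)) =
    (rhoL i (rhoL x y) - rhoL x (rhoL i y)) +
    rhoL x (word (i :: t1 ++ t2) - word (t1 ++ i :: t2)).
  by rewrite (linB (linL x)) word_cons addrA subrK.
rewrite rhoLL rpredD ?rpredZ ?rhoL_filt //.
by rewrite /y word_filt // size_cat /= addSn.
Qed.

Lemma word_perm s t : perm_eq s t -> word s - word t \in filt (size s).
Proof.
elim: s t => [|i s IHs] t.
  by move=> /perm_size/esym/size0nil ->; rewrite subrr rpred0.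
move=> perm_st; have i_t : i \in t by rewrite -(perm_mem perm_st) mem_head.
move: perm_st; case/splitPr: i_t => t1 t2 perm_st.
have perm_s : perm_eq s (t1 ++ t2).
  rewrite -(perm_cons i) (perm_trans perm_st) //.
  by rewrite -cat1s (perm_catCA t1 [:: i] t2) perm_refl.
have -> : word (i :: s) - word (t1 ++ i :: t2) =
    rhoL i (word s - word (t1 ++ t2)) + (word (i :: t1 ++ t2) - word (t1 ++ i :: t2)).
  by rewrite word_cons (linB (linL i)) -word_cons addrA subrK.
rewrite rpredD ?rhoL_filt ?IHs //.
by have := word_swap i t1 t2; rewrite -size_cat -(perm_size perm_s).
Qed.

Definition dH j v := rhoH j v - phi j *: v.
Local Notation gam j := (fun i => - psi a phi (i + j)).

Lemma dH_linear j : linear (dH j).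
Proof.
move=> c u v; rewrite /dH (linD (linH j)) (linZ (linH j)).
by rewrite scalerDr scalerBr !scalerA mulrC opprD addrACA.
Qed.

Lemma dH_rhoL j i v : dH j (rhoL i v) =
  rhoL i (dH j v) - (a + (j + i)%:~R) *: dH (i + j) v + gam j i *: v.
Proof.
have rhoHL : rhoH j (rhoL i v) =
    rhoL i (rhoH j v) - (a + (j + i)%:~R) *: rhoH (i + j) v.
  by rewrite -rhoLH opprB addrC subrK.
have coef : (a + (j + i)%:~R) * phi (i + j) = psi a phi (i + j).
  by rewrite /psi [j + i]addrC.
rewrite /dH rhoHL (linB (linL i)) (linZ (linL i)) scalerBr scalerA coef scaleNr opprB.
by rewrite addrAC [RHS]addrAC [RHS]addrA subrK.
Qed.

Lemma comb_deriv_cons g i s :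
  comb (deriv_word g (i :: s)) = g i *: word s + rhoL i (comb (deriv_word g s)).
Proof. by rewrite comb_cons rhoL_comb. Qed.

Lemma comb_deriv_filt g s : comb (deriv_word g s) \in filt (size s).
Proof.
apply/comb_filt/allP => x x_s; rewrite (size_deriv_word x_s).
by case: s x_s.
Qed.

Lemma dH_word j s : dH j (word s) - comb (deriv_word (gam j) s) \in filt (size s).-1.
Proof.
elim: s j => [|i s IHs] j; first by rewrite /dH Hw subrr /comb big_nil subrr rpred0.
have dH_s k : dH k (word s) \in filt (size s).
  have := rpredD (filt_le (leq_pred _) (IHs k)) (comb_deriv_filt (gam k) s).
  by rewrite subrK.
rewrite word_cons dH_rhoL comb_deriv_cons.
have -> : rhoL i (dH j (word s)) - (a + (j + i)%:~R) *: dH (i + j) (word s) +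
    gam j i *: word s - (gam j i *: word s + rhoL i (comb (deriv_word (gam j) s))) =
    rhoL i (dH j (word s) - comb (deriv_word (gam j) s)) -
    (a + (j + i)%:~R) *: dH (i + j) (word s).
  by rewrite (linB (linL i)) opprD addrA addrK addrAC.
by rewrite rpredB ?rpredZ ?rhoL_filt.
Qed.

Lemma dH_word_filt j s : dH j (word s) \in filt (size s).
Proof.
have := rpredD (filt_le (leq_pred _) (dH_word j s)) (comb_deriv_filt (gam j) s).
by rewrite subrK.
Qed.

Lemma dH_filt j n v : v \in filt n -> dH j v \in filt n.-1.
Proof.
case/filtP=> l size_l ->; rewrite /comb (lin_sum (dH_linear j)) big_seq rpred_sum // => x x_l.
rewrite (linZ (dH_linear j)) rpredZ //; apply: filt_le (dH_word_filt j x.2).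
by case: n size_l => [|n] /allP/(_ x x_l).
Qed.

Lemma rhoH_filt j n v : v \in filt n -> rhoH j v \in filt n.
Proof.
move=> v_n; have := rpredD (filt_le (leq_pred n) (dH_filt j v_n)) (rpredZ (phi j) v_n).
by rewrite subrK.
Qed.

Lemma comb_deriv_comb g l :
  comb (deriv_comb g l) = \sum_(x <- l) x.1 *: comb (deriv_word g x.2).
Proof.
rewrite /comb /deriv_comb big_flatten big_map; apply: eq_bigr => x _.
by rewrite big_map scaler_sumr; apply: eq_bigr => y _; rewrite scalerA.
Qed.

Lemma dH_comb j k l : {in l, forall x, size x.2 = k} ->
  dH j (comb l) - comb (deriv_comb (gam j) l) \in filt k.-1.
Proof.
move=> size_l; rewrite comb_deriv_comb {1}/comb (lin_sum (dH_linear j)) -sumrB big_seq.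
apply: rpred_sum => x x_l; rewrite (linZ (dH_linear j)) -scalerBr rpredZ //.
by rewrite -(size_l x x_l) dH_word.
Qed.

Lemma comb_sortw l : \sum_(x <- l) x.1 *: word (sortw x.2) = comb (symnorm l).
Proof.
rewrite /comb /symnorm big_map /=.
transitivity (\sum_(t <- undup [seq sortw x.2 | x <- l])
                \sum_(x <- l) (if sortw x.2 == t then x.1 *: word t else 0)).
  rewrite exchange_big /=; apply: eq_big_seq => x x_l.
  rewrite (bigD1_seq (sortw x.2)) ?undup_uniq ?mem_undup ?(map_f (fun y => sortw y.2)) //=.
  by rewrite eqxx big1 ?addr0 // => t; rewrite eq_sym => /negbTE ->.
apply: eq_big_seq => t; rewrite mem_undup => /mapP[y _ ->].
rewrite /symcoef scaler_suml [RHS]big_mkcond; apply: eq_bigr => x _.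
by rewrite perm_sortwE sortw_id; case: eqP.
Qed.

Lemma comb_symnorm k l : {in l, forall x, size x.2 = k} ->
  comb l - comb (symnorm l) \in filt k.
Proof.
move=> size_l; rewrite -comb_sortw /comb -sumrB big_seq rpred_sum // => x x_l.
by rewrite -scalerBr rpredZ // -(size_l x x_l) word_perm // perm_sym perm_sort perm_refl.
Qed.

Definition leading k v l :=
  [/\ {in l, forall x, size x.2 = k}, exists t, symcoef l t != 0 & v - comb l \in filt k].

Lemma leading_or_lower n v : v \in filt n.+1 -> (exists l, leading n v l) \/ v \in filt n.
Proof.
case/filtP=> l size_l ->.
pose top := [seq x <- l | size x.2 == n]; pose low := [seq x <- l | size x.2 != n].
have comb_l : comb l = comb top + comb low.
  by rewrite /comb (bigID (fun x : K * seq int => size x.2 == n)) /= !big_filter.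
have low_n : comb low \in filt n.
  apply/comb_filt/allP => x; rewrite mem_filter => /andP[neq_n x_l].
  by rewrite ltn_neqAle neq_n -ltnS (allP size_l).
have size_top : {in top, forall x, size x.2 = n}.
  by move=> x; rewrite mem_filter => /andP[/eqP].
have [sym_top | no_sym] := pselect (exists t, symcoef top t != 0).
  by left; exists top; split=> //; rewrite comb_l addrC addKr.
right; rewrite comb_l rpredD //.
have symnorm0 : comb (symnorm top) = 0.
  rewrite /comb big_map big1 // => t _ /=.
  have /eqP -> : symcoef top t == 0 by apply/negPn/negP => sym_t; apply: no_sym; exists t.
  by rewrite scale0r.
by have := comb_symnorm size_top; rewrite symnorm0 subr0.
Qed.

Lemma leading0 v l : leading 0 v l -> exists2 c, c != 0 & v = c *: w.
Proof.
case=> size_l [t sym_t] /filt0/subr0_eq ->.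
have nil_l x : x \in l -> x.2 = [::] by move/size_l/size0nil.
exists (\sum_(x <- l) x.1).
  case: t sym_t => [|i t]; last first.
    rewrite /symcoef big_seq_cond big1 ?eqxx // => x /andP[/size_l x_l /perm_size].
    by rewrite x_l.
  rewrite /symcoef big_seq_cond [X in _ -> X != 0]big_seq; congr (_ != _).
  by apply: eq_bigl => x; case: (boolP (x \in l)) => //= /nil_l ->.
rewrite /comb scaler_suml !big_seq; apply: eq_bigr => x /nil_l.
by rewrite /word => ->.
Qed.

Lemma leading_reduced k v l : leading k v l ->
  exists2 l', reduced l' &
    [/\ {in l', forall x, size x.2 = k}, l' != [::] & v - comb l' \in filt k].
Proof.
case=> size_l [t sym_t] v_l.
pose l' := [seq x <- symnorm l | x.1 != 0].
have comb_l' : comb l' = comb (symnorm l).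
  rewrite /comb big_filter big_mkcond; apply: eq_bigr => x _.
  by case: eqP => // ->; rewrite scale0r.
exists l'; last split.
- split; first by rewrite filter_uniq ?symnorm_uniq.
    move=> x y; rewrite !mem_filter => /andP[_ x_l] /andP[_ y_l].
    exact: symnorm_perm_inj x_l y_l.
  by move=> x; rewrite mem_filter => /andP[].
- by move=> x; rewrite mem_filter => /andP[_ /(size_symnorm size_l)].
- have [x x_l x_t] : exists2 x, x \in l & perm_eq x.2 t.
    apply/hasP; apply: contraNT sym_t => /hasPn no_x.
    rewrite /symcoef big_seq_cond big1 // => y /andP[y_l].
    by rewrite (negbTE (no_x y y_l)).
  have : (symcoef l (sortw x.2), sortw x.2) \in l'.
    rewrite mem_filter mem_symnorm // andbT /=.
    by rewrite (symcoef_perm _ (perm_trans (permEl (perm_sort _ _)) x_t)).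
  by apply: contraTneq => ->.
- have := rpredD v_l (comb_symnorm size_l).
  by rewrite comb_l' addrA subrK.
Qed.

Lemma leading_dH k v l : separating (psi a phi) -> leading k.+1 v l ->
  exists j l', leading k (dH j v) l'.
Proof.
move=> sep /leading_reduced[l' red_l' [size_l' l'_neq0 v_l']].
pose ls := flatten [seq x.2 | x <- l'].
have ls_neq0 : ls != [::].
  case: l' l'_neq0 size_l' {red_l' v_l'} @ls => // x l' _ size_l'.
  by rewrite /= -size_eq0 size_cat size_l' ?mem_head.
have [j [m m_ls [psi_m psi_i]]] := sep ls ls_neq0.
have [_ /mapP[[c0 t0] x0_l' ->] m_t0] := flattenP m_ls.
exists j, (deriv_comb (gam j) l'); split.
- by move=> x; apply: size_deriv_comb size_l'.
- exists (rem m t0); apply: symcoef_deriv_comb_neq0 red_l' x0_l' m_t0 _ _.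
    by rewrite oppr_eq0.
  move=> x x_l' i i_x neq_im; rewrite psi_i ?oppr0 //.
  by apply/flattenP; exists x.2 => //; apply: map_f.
- have -> : dH j v - comb (deriv_comb (gam j) l') =
      dH j (v - comb l') + (dH j (comb l') - comb (deriv_comb (gam j) l')).
    by rewrite (linB (dH_linear j)) addrA subrK.
  by rewrite rpredD ?(dH_filt j v_l') ?(dH_comb j size_l').
Qed.

Section Submodule.
Variable S : V -> Prop.
Hypothesis HS : is_submodule rhoL rhoH S.

Lemma submodule_leading k v l : separating (psi a phi) -> S v -> leading k v l -> S w.
Proof.
case: HS => _ SD SZ _ SH sep; elim: k v l => [|k IHk] v l Sv lead_v.
  have [c c_neq0 v_cw] := leading0 lead_v.
  by rewrite -[w](scalerK c_neq0) -v_cw; apply: SZ.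
have [j [l' lead']] := leading_dH sep lead_v.
by apply: IHk lead'; rewrite /dH -scaleNr; apply/SD/SZ/Sv/SH.
Qed.

Lemma submodule_w n v : separating (psi a phi) -> v \in filt n -> v != 0 -> S v -> S w.
Proof.
move=> sep; elim: n v => [|n IHn] v v_n v_neq0 Sv.
  by rewrite (filt0 v_n) eqxx in v_neq0.
have [[l lead_v] | v_n'] := leading_or_lower v_n.
  exact: submodule_leading sep Sv lead_v.
exact: IHn v_n' v_neq0 Sv.
Qed.

Lemma submodule_filt n v : S w -> v \in filt n -> S v.
Proof.
case: HS => S0 SD SZ SL _ Sw /filtP[l _ ->].
have S_word s : S (word s) by elim: s => // i s IHs; rewrite word_cons; apply: SL.
by apply: (big_rec S) => // x u _ Su; apply/SD/Su/SZ/S_word.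
Qed.
End Submodule.

Lemma quotient_Wmodule (S : submodClosed V) :
  (forall i, {homo rhoL i : x / x \in S}) -> (forall i, {homo rhoH i : x / x \in S}) ->
  is_Wmodule a (fun i => qmap S (rhoL i)) (fun i => qmap S (rhoH i)).
Proof.
move=> S_L S_H; have qLE := fun i => qmapE (linL i) (S_L i).
have qHE := fun i => qmapE (linH i) (S_H i).
split=> [i|i|i j|i j|i j]; [exact: qmap_linear | exact: qmap_linear | ..];
  elim/quotW=> x.
- by rewrite !qLE -linearB -linearZ rhoLL.
- by rewrite qLE !qHE qLE -linearB -linearZ rhoLH.
- by rewrite !qHE; case: HV => _ _ _ _ ->.
Qed.

Lemma Wphi_generated (S : submodClosed V) : is_Wphi a phi rhoL rhoH w ->
  (forall i, {homo rhoL i : x / x \in S}) -> (forall i, {homo rhoH i : x / x \in S}) ->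
  w \in S -> forall v, v \in S.
Proof.
(* The projection onto V / S and the zero map are both module maps killing w. *)
case=> _ _ univ S_L S_H Sw v.
have qLE := fun i => qmapE (linL i) (S_L i); have qHE := fun i => qmapE (linH i) (S_H i).
have q0 i : (0 : quotient S) = qmap S (rhoL i) 0 /\ (0 : quotient S) = qmap S (rhoH i) 0.
  by rewrite -(linear0 (qpi S)) qLE qHE (lin0 (linL i)) (lin0 (linH i)).
have qH0 j : qmap S (rhoH j) 0 = phi j *: 0 by rewrite scaler0 -(q0 j).2.
have [f [_ _ _ _ f_uniq]] := univ _ _ _ 0 (quotient_Wmodule S_L S_H) qH0.
have pi_f := f_uniq _ (@qpi_linear _ _ S) (proj2 (qpi_eq0 S w) Sw)
  (fun i x => esym (qLE i x)) (fun i x => esym (qHE i x)).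
have zero_lin : linear (fun _ : V => (0 : quotient S)) by move=> c x y; rewrite scaler0 addr0.
have zero_f := f_uniq _ zero_lin erefl (fun i _ => (q0 i).1) (fun i _ => (q0 i).2).
by apply/qpi_eq0; rewrite pi_f -zero_f.
Qed.

Definition wspan : {pred V} := fun v => `[< exists n, v \in filt n >].

Lemma wspan_submod_closed : submod_closed wspan.
Proof.
split; first by apply/asboolP; exists 0%N; rewrite rpred0.
move=> c u v /asboolP[m u_m] /asboolP[n v_n]; apply/asboolP; exists (maxn m n).
rewrite rpredD ?rpredZ //; [apply: filt_le u_m | apply: filt_le v_n].
  exact: leq_maxl.
exact: leq_maxr.
Qed.
HB.instance Definition _ := GRing.isSubmodClosed.Build K V wspan wspan_submod_closed.

Lemma filt_exhaustive : is_Wphi a phi rhoL rhoH w -> forall v, exists n, v \in filt n.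
Proof.
move=> HW v; suff /asboolP : v \in wspan by [].
apply: (@Wphi_generated wspan HW) => [i x | i x |].
- by case/asboolP=> n x_n; apply/asboolP; exists n.+1; apply: rhoL_filt.
- by case/asboolP=> n x_n; apply/asboolP; exists n; apply: rhoH_filt.
by apply/asboolP; exists 1%N; apply: (@word_filt _ [::]).
Qed.

Lemma irreducible_of_separating :
  is_Wphi a phi rhoL rhoH w -> separating (psi a phi) -> ~ reducible rhoL rhoH.
Proof.
move=> HW sep [S [HS [v [Sv /eqP v_neq0]] [u Su]]].
have [n v_n] := filt_exhaustive HW v; have [m u_m] := filt_exhaustive HW u.
exact/Su/(submodule_filt HS _ u_m)/(submodule_w HS sep v_n v_neq0 Sv).
Qed.
End WModule.

(** * Reducibility when psi vanishes *)

Section PsiVanishing.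
Variables (R : realType) (a : Cx R) (phi : int -> Cx R).
Local Notation K := (Cx R).
Hypothesis psi0 : forall k, psi a phi k = 0.
Let psi0E k : (a + k%:~R) * phi k = 0. Proof. exact: psi0. Qed.

Lemma scalar_Wmodule : is_Wmodule a (fun _ (_ : K^o) => 0) (fun j x => phi j *: x).
Proof.
split=> [i c u v | j c u v | i j v | i j v | i j v].
- by rewrite scaler0 addr0.
- by rewrite scalerDr !scalerA mulrC.
- by rewrite subrr scaler0.
- by rewrite scaler0 subrr scalerA [j + i]addrC psi0E scale0r.
- by rewrite !scalerA mulrC.
Qed.

Lemma shift_Wmodule : is_Wmodule a
  (fun i (f : int -> K^o) n => (n - i)%:~R *: f (n - i)) (fun j f => phi j *: f).
Proof.
split=> [i c u v | j c u v | i j f | i j f | i j f].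
- by apply/funext => n; rewrite !addrfctE !scalrfctE /= scalerDr !scalerA mulrC.
- by rewrite scalerDr !scalerA mulrC.
- apply/funext => n; rewrite !addrfctE !opprfctE !scalrfctE /=.
  have -> : n - i - j = n - (i + j) by lia.
  have -> : n - j - i = n - (i + j) by lia.
  rewrite !scalerA -scalerBl; congr (_ *: _).
  by rewrite !intrB !intrD; ring.
- apply/funext => n; rewrite !addrfctE !opprfctE !scalrfctE /=.
  by rewrite [RHS]scalerA [j + i]addrC psi0E scale0r !scalerA mulrC subrr.
- by rewrite !scalerA mulrC.
Qed.

Lemma reducible_of_psi_eq0 (V : lmodType K) (rhoL rhoH : int -> V -> V) (w : V) :
  is_Wphi a phi rhoL rhoH w -> reducible rhoL rhoH.
Proof.
case=> _ _ univ.
have [f [f_lin f_w f_L f_H _]] := univ _ _ _ (1 : K^o) scalar_Wmodule (fun=> erefl).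
have [g [g_lin g_w g_L _ _]] :=
  univ _ _ _ (fun n : int => (n == 1)%:R : K^o) shift_Wmodule (fun=> erefl).
exists (fun v => f v = 0); split.
- split=> [|u v fu fv|c v fv|i v _|i v fv]; first exact: lin0 f_lin.
  + by rewrite (linD f_lin) fu fv addr0.
  + by rewrite (linZ f_lin) fv scaler0.
  + by rewrite f_L.
  + by rewrite f_H fv scaler0.
- exists (rhoL 1 w); split; first by rewrite f_L.
  move=> Lw0; have := congr1 (fun h : int -> K^o => h 2) (g_L 1 w).
  rewrite Lw0 (lin0 g_lin) g_w /= (_ : 2 - 1 = 1) // scale1r => /eqP.
  by rewrite eq_sym oner_eq0.
- by exists w; rewrite f_w => /eqP; rewrite oner_eq0.
Qed.
End PsiVanishing.

Lemma psi_eq0P (R : realType) (a : Cx R) (phi : int -> Cx R) (j0 : int) :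
  Sphi phi j0 ->
  (forall k, psi a phi k = 0) <-> ((forall j, Sphi phi j <-> j = j0) /\ a = - j0%:~R).
Proof.
rewrite /Sphi /psi => phi_j0; split=> [psi0 | [supp ->] k].
  have a_j0 : a = - j0%:~R.
    apply/eqP; rewrite -addr_eq0.
    by have /eqP := psi0 j0; rewrite mulf_eq0 (negbTE phi_j0) orbF.
  split=> // j; split=> [phi_j | -> //]; apply/eqP.
  have /eqP := psi0 j; rewrite mulf_eq0 (negbTE phi_j) orbF a_j0 addrC -intrB.
  by rewrite intr_eq0 subr_eq0.
have [-> | neq_k] := eqVneq k j0; first by rewrite addNr mul0r.
suff -> : phi k = 0 by rewrite mulr0.
by apply/eqP; apply: contraNT neq_k => /supp ->.
Qed.

Theorem proposition4p7 (R : realType) (a : Cx R) (phi : int -> Cx R)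
    (j0 : int)
    (Hphi : (upper_finite phi /\ Sphi phi j0 /\ (forall j, Sphi phi j -> j <= j0))
            \/ (lower_finite phi /\ Sphi phi j0 /\ (forall j, Sphi phi j -> j0 <= j)))
    (V : lmodType (Cx R)) (rhoL rhoH : int -> V -> V) (w : V)
    (HW : is_Wphi a phi rhoL rhoH w) :
  reducible rhoL rhoH <->
  ((forall j, Sphi phi j <-> j = j0) /\ a = - (j0%:~R)).
Proof.
have phi_j0 : Sphi phi j0 by case: Hphi => -[_ []].
have [HV Hw _] := HW.
apply: (iff_trans _ (psi_eq0P a phi_j0)); split=> [red | psi0]; last first.
  exact: (reducible_of_psi_eq0 psi0 HW).
apply: contrapT => /existsNP[k /eqP psi_k].
apply: irreducible_of_separating HV Hw HW _ red.
have supp_psi y : psi a phi y != 0 -> Sphi phi y.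
  by apply: contraNneq => phi_y; rewrite /psi phi_y mulr0.
case: Hphi => -[_ [_ bound]].
  by apply: (separating_bounded_above (b := j0)) => [|y /supp_psi /bound]; first exists k.
by apply: (separating_bounded_below (b := j0)) => [|y /supp_psi /bound]; first exists k.
Qed.
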